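(* For every positive integer $n$, let $c_n$ be the smallest positive integer such that $c_n P' \in E_n$ for every $P \in E_n$. Then $$c_n = \mathrm{lcm}(1,2,\dots,n).$$
   Context: For $n \in \mathbb{N}$, $E_n$ denotes the set of polynomials $P \in \mathbb{C}[X]$ of degree $\leq n$ (including the zero polynomial) such that $P(\mathbb{Z}) \subset \mathbb{Z}$ (integer-valued polynomials of degree at most $n$). $P'$ denotes the derivative of $P$. *)

From HB Require Import structures.
From mathcomp Require Import all_boot all_order all_algebra all_field.
Set Implicit Arguments. Unset Strict Implicit. Unset Printing Implicit Defensive.
Import Order.TTheory GRing.Theory Num.Theory.
Local Open Scope ring_scope.

(* Complex numbers are modelled by algC (algebraic complex numbers). *)

Definition int_valued (P : {poly algC}) : Prop :=
  forall z : int, P.[z%:~R] \is a Num.int.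

(* E_n : integer-valued polynomials of degree <= n (zero polynomial included) *)
Definition inE (n : nat) (P : {poly algC}) : Prop :=
  (size P <= n.+1)%N /\ int_valued P.

Definition admissible (n c : nat) : Prop :=
  forall P : {poly algC}, inE n P -> inE n (c%:R *: P^`()).

Definition lcm_upto (n : nat) : nat := \big[lcmn/1%N]_(1 <= i < n.+1) i.

From HB Require Import structures.
From mathcomp Require Import all_boot all_order all_algebra all_field.
From mathcomp Require Import ring.
Set Implicit Arguments. Unset Strict Implicit. Unset Printing Implicit Defensive.
Import Order.TTheory GRing.Theory Num.Theory.
Local Open Scope ring_scope.

(* The binomial polynomials binpoly k = X(X-1)...(X-k+1)/k!, k <= n, form a
   Z-basis of E_n: an integer-valued P is recovered from its forward difference
   and P(0).  As (binpoly k)'(0) = (-1)^(k-1)/k and E_n is stable under integer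
   translations, c P' lies in E_n for all P in E_n exactly when every k <= n
   divides c, i.e. when lcm(1, ..., n) divides c. *)

Section BinomialPolynomials.
Variable R : numFieldType.

Definition binpoly (k : nat) : {poly R} :=
  (k`!%:R)^-1 *: \prod_(0 <= i < k) ('X - (i%:R)%:P).

Lemma horner_binpoly k x :
  (binpoly k).[x] = (k`!%:R)^-1 * \prod_(0 <= i < k) (x - i%:R).
Proof. by rewrite hornerZ horner_prod; under eq_bigr do rewrite hornerXsubC. Qed.

Lemma natr_fact_neq0 k : (k`!%:R : R) != 0.
Proof. by rewrite pnatr_eq0 -lt0n fact_gt0. Qed.

Lemma size_binpoly k : size (binpoly k) = k.+1.
Proof.
rewrite size_scale ?size_prod_XsubC ?size_iota ?subn0 //.
by rewrite invr_eq0 natr_fact_neq0.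
Qed.

Lemma binpoly0 : binpoly 0 = 1.
Proof. by rewrite /binpoly big_geq // fact0 invr1 scale1r. Qed.

Lemma binpolyS_horner0 k : (binpoly k.+1).[0] = 0.
Proof. by rewrite horner_binpoly big_nat_recl // sub0r oppr0 mul0r mulr0. Qed.

Lemma binpoly_pascal k x :
  (binpoly k.+1).[x + 1] - (binpoly k.+1).[x] = (binpoly k).[x].
Proof.
rewrite !horner_binpoly big_nat_recl // big_nat_recr //= factS natrM subr0.
under eq_bigr do rewrite -addn1 natrD opprD addrACA subrr addr0.
have := natr_fact_neq0 k; have : (k.+1%:R : R) != 0 by rewrite pnatr_eq0.
rewrite -natr1 => ? ?; field; exact/andP.
Qed.

Lemma deriv_binpolyS_horner0 k : (binpoly k.+1)^`().[0] = (-1) ^+ k / k.+1%:R.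
Proof.
rewrite derivZ hornerZ big_nat_recl // derivM derivXsubC mul1r hornerD hornerM.
rewrite hornerXsubC sub0r oppr0 mul0r addr0 horner_prod.
have -> : \prod_(0 <= i < k) ('X - (i.+1%:R)%:P).[0] = (-1) ^+ k * k`!%:R :> R.
  elim: k => [|k IH]; first by rewrite big_geq // fact0 expr0 mulr1.
  by rewrite big_nat_recr //= IH hornerXsubC factS natrM exprS; ring.
have := natr_fact_neq0 k; have : (k.+1%:R : R) != 0 by rewrite pnatr_eq0.
rewrite factS natrM -natr1 => ? ?; field; exact/andP.
Qed.

Definition fdiff (P : {poly R}) : {poly R} := P \Po ('X + 1) - P.
Arguments fdiff : simpl never.

Fact fdiff_is_semilinear : semilinear fdiff.
Proof.
split=> [a P | P Q]; rewrite /fdiff ?comp_polyZ ?comp_polyD ?scalerBr //.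
by rewrite addrACA opprD.
Qed.

HB.instance Definition _ :=
  GRing.isSemilinear.Build R {poly R} {poly R} _ fdiff fdiff_is_semilinear.

Lemma horner_fdiff (P : {poly R}) x : (fdiff P).[x] = P.[x + 1] - P.[x].
Proof. by rewrite hornerD hornerN horner_comp hornerD hornerX hornerC. Qed.

Lemma fdiffC c : fdiff c%:P = 0.
Proof. by rewrite /fdiff comp_polyC subrr. Qed.

Lemma size_fdiff (P : {poly R}) : (size (fdiff P) <= (size P).-1)%N.
Proof.
have sX1 : size ('X + 1 : {poly R}) = 2 by rewrite -polyC1 size_XaddC.
apply/leq_sizeP => j hj; rewrite coefB.
have [hPj|hPj] := leqP (size P) j.
  by rewrite !nth_default ?subr0 ?size_comp_poly2.
have -> : j = (size P).-1.
  by apply/eqP; rewrite eqn_leq hj andbT -ltnS (ltn_predK hPj).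
rewrite -{1}(size_comp_poly2 P sX1) -!lead_coefE lead_coef_comp ?sX1 //.
by rewrite -polyC1 lead_coefXaddC expr1n mulr1 subrr.
Qed.

Lemma poly_nat_eq0 (P : {poly R}) : (forall i : nat, P.[i%:R] = 0) -> P = 0.
Proof.
move=> P0.
apply: (roots_geq_poly_eq0 (rs := [seq i%:R : R | i <- iota 0 (size P)])).
- by apply/allP => _ /mapP[i _ ->]; rewrite /root P0.
- by rewrite map_inj_uniq ?iota_uniq // => i j /eqP; rewrite eqr_nat => /eqP.
- by rewrite size_map size_iota.
Qed.

Lemma fdiff_eq0 (P : {poly R}) : fdiff P = 0 -> P.[0] = 0 -> P = 0.
Proof.
move=> dP0 P00; apply: poly_nat_eq0; elim=> // i IHi.
by have := horner_fdiff P i%:R; rewrite dP0 horner0 IHi subr0 natr1 => /esym.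
Qed.

Lemma fdiff_binpolyS k : fdiff (binpoly k.+1) = binpoly k.
Proof.
apply/eqP; rewrite -subr_eq0; apply/eqP/poly_nat_eq0 => i.
by rewrite hornerD hornerN horner_fdiff binpoly_pascal subrr.
Qed.

Lemma size_deriv_leq (P : {poly R}) : (size P^`() <= size P)%N.
Proof. by have [->|/lt_size_deriv/ltnW] := eqVneq P 0; rewrite ?deriv0. Qed.

Lemma deriv_comp_XaddC_horner0 (P : {poly R}) c :
  (P \Po ('X + c%:P))^`().[0] = P^`().[c].
Proof.
rewrite deriv_comp derivD derivX derivC addr0 mulr1 horner_comp.
by rewrite hornerD hornerX hornerC add0r.
Qed.

End BinomialPolynomials.

Arguments binpoly {R} k.

Lemma int_valued_fdiff P : int_valued P -> int_valued (fdiff P).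
Proof.
move=> iP z; rewrite horner_fdiff rpredB //.
by rewrite -[1]/(1%:~R : algC) -intrD.
Qed.

Lemma int_valued_of_fdiff P :
  int_valued (fdiff P) -> P.[0] \is a Num.int -> int_valued P.
Proof.
move=> iDP iP0.
have iPnat (m : nat) : P.[m%:R] \is a Num.int /\ P.[- m%:R] \is a Num.int.
  elim: m => [|m [iPm iPNm]]; first by rewrite oppr0.
  split.
  - have := iDP m; rewrite -pmulrn horner_fdiff natr1 => /(rpredD iPm).
    by rewrite addrC subrK.
  - have := iDP (- m.+1%:Z); rewrite -nmulrn horner_fdiff -natr1 opprD addrNK.
    by move=> /(rpredB iPNm); rewrite subKr.
case=> m; first by rewrite -pmulrn; case: (iPnat m).
by rewrite NegzE -nmulrn; case: (iPnat m.+1).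
Qed.

Lemma int_valued_binpoly k : int_valued (binpoly k).
Proof.
elim: k => [|k IHk]; first by rewrite binpoly0 => z; rewrite hornerC rpred1.
by apply: int_valued_of_fdiff; rewrite ?fdiff_binpolyS ?binpolyS_horner0.
Qed.

Lemma int_valued_binpoly_expansion n (P : {poly algC}) :
  (size P <= n)%N -> int_valued P ->
  exists a : nat -> algC,
    (forall k, a k \is a Num.int) /\ P = \sum_(0 <= k < n) a k *: binpoly k.
Proof.
elim: n P => [|n IHn] P sP iP.
  exists (fun=> 0); split=> [k|]; first exact: rpred0.
  by rewrite big_geq //; apply/eqP; rewrite -size_poly_leq0.
have sDP : (size (fdiff P) <= n)%N.
  by apply: leq_trans (size_fdiff P) _; move: sP; case: (size P).
have [b [ib eDP]] := IHn _ sDP (int_valued_fdiff iP).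
exists (fun k => if k is k'.+1 then b k' else P.[0]); split.
  by case=> //; have := iP 0; rewrite mulr0z.
rewrite big_nat_recl //= binpoly0 alg_polyC.
set Q := _ + _.
have eDQ : fdiff Q = fdiff P.
  rewrite raddfD /= fdiffC add0r raddf_sum eDP.
  (* A bare linearZ would match the scaling hidden inside binpoly. *)
  by apply: eq_bigr => i _; rewrite /= [fdiff _]linearZ /= fdiff_binpolyS.
apply/eqP; rewrite -subr_eq0; apply/eqP/fdiff_eq0.
  by rewrite raddfB /= eDQ subrr.
rewrite hornerD hornerN hornerD hornerC horner_sum big1 ?addr0 ?subrr // => i _.
by rewrite hornerZ binpolyS_horner0 mulr0.
Qed.

Lemma int_valued_comp_XaddC P (z : int) :
  int_valued P -> int_valued (P \Po ('X + (z%:~R)%:P)).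
Proof. by move=> iP w; rewrite horner_comp hornerD hornerX hornerC -intrD. Qed.

Lemma int_scale_deriv_horner0 n (c : nat) (P : {poly algC}) :
  (forall k, (0 < k <= n)%N -> (k %| c)%N) ->
  (size P <= n.+1)%N -> int_valued P -> c%:R * P^`().[0] \is a Num.int.
Proof.
move=> dvd_c sP iP; have [a [ia ->]] := int_valued_binpoly_expansion sP iP.
rewrite raddf_sum horner_sum mulr_sumr big_nat.
apply: rpred_sum => -[|k] /andP[_ kn] /=; rewrite derivZ hornerZ.
  by rewrite binpoly0 -polyC1 derivC horner0 !mulr0.
rewrite deriv_binpolyS_horner0 mulrCA rpredM ?ia // mulrCA rpredMsign.
by rewrite -natr_div ?rpred_nat ?dvd_c // unitfE pnatr_eq0.
Qed.

Lemma admissibleP n c :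
  admissible n c <-> forall k, (0 < k <= n)%N -> (k %| c)%N.
Proof.
split=> [adm [|k] // /andP[_ kn] | dvd_c P [sP iP]].
  have [|_ /(_ 0)] := adm (binpoly k.+1).
    by split; [rewrite size_binpoly | exact: int_valued_binpoly].
  rewrite mulr0z hornerZ deriv_binpolyS_horner0 mulrCA rpredMsign => ck_int.
  by rewrite -dvdC_nat unfold_in pnatr_eq0.
split.
  exact: leq_trans (size_scale_leq _ _) (leq_trans (size_deriv_leq P) sP).
move=> z; rewrite hornerZ -deriv_comp_XaddC_horner0.
apply: int_scale_deriv_horner0 dvd_c _ (int_valued_comp_XaddC z iP).
by rewrite size_comp_poly2 ?size_XaddC.
Qed.

Lemma lcm_upto_gt0 n : (0 < lcm_upto n)%N.
Proof.
rewrite /lcm_upto big_seq; apply: (big_ind (leq 1)) => // [x y x0 y0|i].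
  by rewrite lcmn_gt0 x0 y0.
by rewrite mem_index_iota => /andP[].
Qed.

Lemma lcm_upto_dvdP n m :
  reflect (forall i, (0 < i <= n)%N -> (i %| m)%N) (lcm_upto n %| m)%N.
Proof.
apply: (iffP idP) => [dvd_m i /andP[i0 iN] | dvd_m].
  apply: dvdn_trans dvd_m.
  by rewrite /lcm_upto (big_rem i) ?mem_index_iota ?ltnS ?i0 ?dvdn_lcml.
rewrite /lcm_upto big_seq; apply: (big_ind (dvdn^~ m)) => // [x y|i].
  by rewrite dvdn_lcm => -> ->.
by rewrite mem_index_iota ltnS => /dvd_m.
Qed.

Theorem theorem1 (n : nat) (hn : (0 < n)%N) :
  [/\ (0 < lcm_upto n)%N, admissible n (lcm_upto n)
    & forall c : nat, (0 < c)%N -> admissible n c -> (lcm_upto n <= c)%N].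
Proof.
split; [exact: lcm_upto_gt0 | exact/admissibleP/lcm_upto_dvdP |].
by move=> c c_gt0 /admissibleP/lcm_upto_dvdP/dvdn_leq; apply.
Qed.
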